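(* Let $\mathcal{F}=(V_m,\eta_m)_{m=1}^4$ be a tetrahedron of flags in $\mathbb{RP}^3$. The following are equivalent: (1) $\mathcal{F}$ is an inscribed tetrahedron of flags (of hyperbolic, Anti-de Sitter or half-pipe type); (2) $t^{\mathcal{F}}_\sigma=1$ for all edge-faces $\sigma$; (3) $e^{\mathcal{F}}_\sigma=e^{\mathcal{F}}_{\mathrm{op}\,\sigma}$ for all edge-faces $\sigma$. Moreover, in this case, for any edge-face $\sigma$, $\mathcal{F}$ is of hyperbolic type if $j_\sigma>0$, of Anti-de Sitter type if $j_\sigma<0$, and of half-pipe type if $j_\sigma=0$, where $j_\sigma=e_\sigma-X_\sigma^2$.
   Context: Flags: $(V,\eta)$, $\eta$ a plane of $\mathbb{RP}^3$ through $V$. A tetrahedron of flags is a non-degenerate ($\eta_i(V_j)=0\iff i=j$) ordered quadruple $(V_m,\eta_m)_{m=1}^4$ with $V_m$ not coplanar such that some projective tetrahedron with vertices $V_m$ has interior disjoint from all $\eta_m$. Edge-faces $\sigma=(ij)k$ are even permutations $[ijkl]$ of $\{1,2,3,4\}$; $\sigma_+=(ki)j$, $\sigma_-=(jk)i$, $\mathrm{op}\,\sigma=(lk)j$. Triple ratio $t_\sigma=\frac{\bar\eta_i(\bar V_j)\bar\eta_j(\bar V_k)\bar\eta_k(\bar V_i)}{\bar\eta_i(\bar V_k)\bar\eta_j(\bar V_i)\bar\eta_k(\bar V_j)}$, edge ratio $e_\sigma=\frac{\bar\eta_i(\bar V_k)\bar\eta_j(\bar V_l)}{\bar\eta_i(\bar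 V_l)\bar\eta_j(\bar V_k)}$; $\mu_\sigma=e_{\sigma_-}e_{\sigma_+}-e_{\sigma_-}+1$, $X_\sigma=\mu_\sigma t_\sigma e_\sigma/(t_\sigma+1)$. Let $B$ be a symmetric bilinear form on $\mathbb{R}^4$ which is either nondegenerate of signature $(3,1)$ (hyperbolic type), nondegenerate of signature $(2,2)$ (Anti-de Sitter type), or degenerate with one-dimensional radical and of signature $(2,1)$ on the quotient by the radical (half-pipe type); let $\mathbb{X}_B=\{[v]:B(v,v)<0\}$. $\mathcal{F}$ is inscribed in $\mathbb{X}_B$ if there is a projective tetrahedron with vertices $V_1,\dots,V_4$ with interior contained in $\mathbb{X}_B$, each $V_m=[v_m]$ satisfies $B(v_m,v_m)=0$ and $v_m$ not in the radical, and $\eta_m=[B(v_m,\cdot)]$ is the tangent plane to the quadric at $V_m$. $\mathcal{F}$ is an inscribed tetrahedron of flags of the corresponding type if it is inscribed in $\mathbb{X}_B$ for some such $B$. *)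

(* RP^3 is modelled over an arbitrary real closed field R
   (the statement is first-order, so over R = the reals by transfer). *)
From HB Require Import structures.
From mathcomp Require Import all_boot all_order all_algebra all_fingroup.
Set Implicit Arguments. Unset Strict Implicit. Unset Printing Implicit Defensive.
Import Order.TTheory GRing.Theory Num.Theory.
Local Open Scope ring_scope.

Section TetraDefs.
Variable R : rcfType.

(* Points of RP^3 are given by lifts v : 'rV_4 (nonzero row vectors),
   planes by lifts eta : 'rV_4 (nonzero covectors); eta(v) is the pairing. *)
Definition pair (eta v : 'rV[R]_4) : R := (eta *m v^T) 0 0.

Definition is_flag (v eta : 'rV[R]_4) : Prop :=
  v != 0 /\ eta != 0 /\ pair eta v = 0.

(* Interior of the projective tetrahedron with vertices [v m] determined by
   the lifts c m *: v m (c m <> 0): points [sum_m a_m c_m v_m], all a_m > 0. *)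
Definition tpoint (v : 'I_4 -> 'rV[R]_4) (c a : 'I_4 -> R) : 'rV[R]_4 :=
  \sum_(m < 4) (a m * c m) *: v m.

Definition tetra_of_flags (v eta : 'I_4 -> 'rV[R]_4) : Prop :=
  (forall m, is_flag (v m) (eta m)) /\
  (forall i j, pair (eta i) (v j) = 0 <-> i = j) /\
  ~ (exists e : 'rV[R]_4, e != 0 /\ forall m, pair e (v m) = 0) /\
  (* some projective tetrahedron with vertices V_m has interior
     disjoint from all the planes eta_m *)
  (exists c : 'I_4 -> R, (forall m, c m != 0) /\
     forall a : 'I_4 -> R, (forall m, 0 < a m) ->
       forall m, pair (eta m) (tpoint v c a) != 0).

Definition bform (B : 'M[R]_4) (x y : 'rV[R]_4) : R := (x *m B *m y^T) 0 0.

Definition sig_diag (p q : nat) : 'M[R]_4 :=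
  diag_mx (\row_(i < 4) if (i < p)%N then 1 else if (i < p + q)%N then -1 else 0).

(* B is symmetric of signature (p, q) (and rank p + q), via Sylvester's
   normal form: B is congruent to sig_diag p q. *)
Definition has_signature (B : 'M[R]_4) (p q : nat) : Prop :=
  B^T = B /\ exists P : 'M[R]_4, P \in unitmx /\ P *m B *m P^T = sig_diag p q.

Definition hyperbolic_form B := has_signature B 3 1.
Definition AdS_form B := has_signature B 2 2.
(* half-pipe type: one-dimensional radical, signature (2,1) on the quotient *)
Definition halfpipe_form B := has_signature B 2 1.

(* F is inscribed in X_B = {[x] : B(x,x) < 0}. *)
Definition inscribed_in (B : 'M[R]_4) (v eta : 'I_4 -> 'rV[R]_4) : Prop :=
  (exists c : 'I_4 -> R, (forall m, c m != 0) /\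
     forall a : 'I_4 -> R, (forall m, 0 < a m) ->
       bform B (tpoint v c a) (tpoint v c a) < 0) /\
  (forall m, bform B (v m) (v m) = 0) /\
  (forall m, v m *m B != 0) /\
  (forall m, exists lam : R, lam != 0 /\ eta m = lam *: (v m *m B)).

Definition inscribed_hyperbolic v eta :=
  exists B, hyperbolic_form B /\ inscribed_in B v eta.
Definition inscribed_AdS v eta :=
  exists B, AdS_form B /\ inscribed_in B v eta.
Definition inscribed_halfpipe v eta :=
  exists B, halfpipe_form B /\ inscribed_in B v eta.

Definition inscribed_tetra v eta :=
  inscribed_hyperbolic v eta \/ inscribed_AdS v eta \/ inscribed_halfpipe v eta.

Section Ratios.
Variables (v eta : 'I_4 -> 'rV[R]_4).
Definition ev (i j : 'I_4) : R := pair (eta i) (v j).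

Definition triple_ratio (i j k : 'I_4) : R :=
  (ev i j * ev j k * ev k i) / (ev i k * ev j i * ev k j).
Definition edge_ratio (i j k l : 'I_4) : R :=
  (ev i k * ev j l) / (ev i l * ev j k).
End Ratios.

(* Edge-faces sigma = (ij)k <-> even permutations s = [ijkl]:
   i = s 0, j = s 1, k = s 2, l = s 3. *)
Definition o0 : 'I_4 := @Ordinal 4 0 isT.
Definition o1 : 'I_4 := @Ordinal 4 1 isT.
Definition o2 : 'I_4 := @Ordinal 4 2 isT.
Definition o3 : 'I_4 := @Ordinal 4 3 isT.

Section EdgeFace.
Variables (v eta : 'I_4 -> 'rV[R]_4) (s : {perm 'I_4}).
Let i := s o0. Let j := s o1. Let k := s o2. Let l := s o3.
Definition t_sigma : R := triple_ratio v eta i j k.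
Definition e_sigma : R := edge_ratio v eta i j k l.
(* sigma_+ = (ki)j = [kijl], sigma_- = (jk)i = [jkil], op sigma = (lk)j = [lkji] *)
Definition e_plus : R := edge_ratio v eta k i j l.
Definition e_minus : R := edge_ratio v eta j k i l.
Definition e_op : R := edge_ratio v eta l k j i.
Definition mu_sigma : R := e_minus * e_plus - e_minus + 1.
Definition X_sigma : R := mu_sigma * t_sigma * e_sigma / (t_sigma + 1).
Definition j_sigma : R := e_sigma - X_sigma ^+ 2.
End EdgeFace.

End TetraDefs.

(* Write G i j := eta_i(v_j). If the tetrahedron is inscribed in the quadric of B, then eta_i
   is a multiple lam_i B(v_i, -), so G = diag(lam) M with M = (B(v_i, v_j)) symmetric; hence
   all triple ratios are 1 and opposite edge ratios agree. Conversely, trivial triple ratios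
   make G symmetrizable, G = diag(lam) N diag(c)^-1 with N symmetric and hollow, and the
   interior condition of a tetrahedron of flags forces the off-diagonal entries of N to share
   one sign, say negative. The form whose Gram matrix in the frame (c_m v_m) is N then vanishes
   at the vertices, is negative inside the tetrahedron and has the eta_m as tangent planes.
   Equal opposite edge ratios make the (positive) triple ratios of adjacent faces mutually
   inverse, hence equal to 1. Finally N is congruent to diag(1, 1, -1, -sg det N), and j_sigma
   is a positive multiple of -det N, which determines the type. *)

From HB Require Import structures.
From mathcomp Require Import all_boot all_order all_algebra all_fingroup.
From mathcomp Require Import ring lra.
Set Implicit Arguments. Unset Strict Implicit. Unset Printing Implicit Defensive.
Import Order.TTheory GRing.Theory Num.Theory.
Local Open Scope ring_scope.

Section Congruence.
Variables (R : rcfType) (n : nat).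

Definition congruent (A B : 'M[R]_n) : Prop :=
  exists P : 'M[R]_n, P \in unitmx /\ P *m A *m P^T = B.

Lemma congruent_trans (A B C : 'M[R]_n) :
  congruent A B -> congruent B C -> congruent A C.
Proof.
move=> [P [uP <-]] [Q [uQ <-]]; exists (Q *m P).
by rewrite unitmx_mul uQ uP trmx_mul !mulmxA.
Qed.

Lemma congruent_perm (A : 'M[R]_n) (s : 'S_n) :
  congruent A (\matrix_(i, j) A (s i) (s j)).
Proof.
exists (perm_mx s); rewrite unitmx_perm tr_perm_mx -col_permE -row_permE.
by split => //; apply/matrixP => i j; rewrite !mxE.
Qed.

Definition sg_scale (x : R) : R := if x == 0 then 1 else (Num.sqrt `|x|)^-1.

Lemma sg_scale_neq0 (x : R) : sg_scale x != 0.
Proof.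
rewrite /sg_scale; have [_|x0] := eqVneq x 0; first exact: oner_neq0.
by rewrite invr_eq0 sqrtr_eq0 -ltNge normr_gt0.
Qed.

Lemma sg_scaleE (x : R) : sg_scale x ^+ 2 * x = Num.sg x.
Proof.
rewrite /sg_scale; have [->|x0] := eqVneq x 0; first by rewrite mulr0 sgr0.
rewrite exprVn sqr_sqrtr ?normr_ge0 // {2}[x]numEsg mulrCA mulVf ?mulr1 //.
by rewrite normr_eq0.
Qed.

Lemma congruent_diag_sg (d : 'rV[R]_n) :
  congruent (diag_mx d) (diag_mx (map_mx Num.sg d)).
Proof.
exists (diag_mx (map_mx sg_scale d)); split.
  rewrite unitmxE det_diag unitfE prodf_seq_neq0.
  by apply/allP => i _; rewrite mxE sg_scale_neq0.
rewrite tr_diag_mx !mulmx_diag; congr diag_mx; apply/rowP => j.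
by rewrite !mxE -sg_scaleE; ring.
Qed.

End Congruence.

Section Matrices.
Variable R : rcfType.

Lemma ord4P (i : 'I_4) : [\/ i = o0, i = o1, i = o2 | i = o3].
Proof.
by case: i => [[|[|[|[|?]]]] ?] //; [constructor 1|constructor 2|constructor 3|constructor 4];
  apply: val_inj.
Qed.

Lemma big_ord4 (F : 'I_4 -> R) : \sum_(i < 4) F i = F o0 + F o1 + F o2 + F o3.
Proof.
rewrite !big_ord_recr big_ord0 /= add0r.
by congr (_ + _ + _ + _); congr F; apply: val_inj.
Qed.

Definition mx4 (L : seq (seq R)) : 'M[R]_4 := \matrix_(i, j) nth 0 (nth [::] L i) j.
Definition row4 (x0 x1 x2 x3 : R) : 'rV[R]_4 := \row_j nth 0 [:: x0; x1; x2; x3] j.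

Ltac mx4_entries :=
  apply/matrixP => -[[|[|[|[|?]]]] ?] -[[|[|[|[|?]]]] ?] //;
  rewrite !(mxE, big_ord4, permE) //=.

Lemma sig_diag22 : sig_diag R 2 2 = diag_mx (row4 1 1 (-1) (-1)).
Proof. by mx4_entries. Qed.

Lemma sig_diag21 : sig_diag R 2 1 = diag_mx (row4 1 1 (-1) 0).
Proof. by mx4_entries. Qed.

Lemma congruent_sig_diag31 : congruent (diag_mx (row4 1 1 (-1) 1)) (sig_diag R 3 1).
Proof.
have -> : sig_diag R 3 1 =
  \matrix_(i, j) diag_mx (row4 1 1 (-1) 1) (tperm o2 o3 i) (tperm o2 o3 j) by mx4_entries.
exact: congruent_perm.
Qed.

Lemma signature_of_sg (B : 'M[R]_4) (x : R) : B^T = B ->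
  congruent B (diag_mx (row4 1 1 (-1) (Num.sg x))) ->
  (0 < x -> hyperbolic_form B) /\ (x < 0 -> AdS_form B) /\ (x = 0 -> halfpipe_form B).
Proof.
move=> symB BD; split; [|split] => [x_gt0|x_lt0|x0]; split=> //.
- by rewrite gtr0_sg // in BD; exact: congruent_trans BD (congruent_sig_diag31).
- by rewrite ltr0_sg // in BD; rewrite sig_diag22.
- by rewrite x0 sgr0 in BD; rewrite sig_diag21.
Qed.

Definition hollow4 (a b c d e f : R) : 'M[R]_4 :=
  mx4 [:: [:: 0; a; b; c]; [:: a; 0; d; e]; [:: b; d; 0; f]; [:: c; e; f; 0]].

(* The determinant of [hollow4 a b c d e f]. *)
Definition hollow_disc (a b c d e f : R) : R :=
  (a * f) ^+ 2 + (b * e) ^+ 2 + (c * d) ^+ 2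
  - 2 * (a * f) * (b * e) - 2 * (b * e) * (c * d) - 2 * (c * d) * (a * f).

Lemma hollow4_perm (N : 'M[R]_4) (s : 'S_4) :
  (forall i j, N i j = N j i) -> (forall i, N i i = 0) ->
  \matrix_(x, y) N (s x) (s y) =
  hollow4 (N (s o0) (s o1)) (N (s o0) (s o2)) (N (s o0) (s o3))
          (N (s o1) (s o2)) (N (s o1) (s o3)) (N (s o2) (s o3)).
Proof.
move=> N_sym N_diag; apply/matrixP => x y; rewrite !mxE.
by case: (ord4P x) => ->; case: (ord4P y) => -> //=; rewrite ?N_diag // N_sym.
Qed.

Lemma hollow4_diag (a b c d e f : R) : a != 0 -> b != 0 -> d != 0 ->
  congruent (hollow4 a b c d e f)
    (diag_mx (row4 (- 2 * a) (- 2 * b * d / a) (2 * a)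
                   (hollow_disc a b c d e f / (2 * a * b * d)))).
Proof.
move=> a0 b0 d0; pose g := (c * d + b * e - a * f) / (2 * b * d).
(* Symmetric Gaussian elimination, starting from the hyperbolic pair e_0 - e_1, e_0 + e_1. *)
pose U := mx4 [:: [:: 1; -1; 0; 0]; [:: - d / a; - b / a; 1; 0]; [:: 1; 1; 0; 0];
                  [:: (g * d - e) / a; (g * b - c) / a; - g; 1]].
pose V := mx4 [:: [:: 1 / 2; 0; 1 / 2; 0]; [:: - 1 / 2; 0; 1 / 2; 0];
                  [:: (d - b) / (2 * a); 1; (d + b) / (2 * a); 0];
                  [:: (e - c) / (2 * a); g; (e + c) / (2 * a); 1]].
have VU1 : V *m U = 1%:M.
  by rewrite /V /U /g; mx4_entries; field; rewrite ?a0 ?b0 ?d0.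
exists U; split; first by case: (mulmx1_unit VU1).
by rewrite /U /g /hollow_disc; mx4_entries; field; rewrite ?a0 ?b0 ?d0.
Qed.

Lemma hollow4_congruent_sg (a b c d e f : R) : a < 0 -> b < 0 -> d < 0 ->
  congruent (hollow4 a b c d e f)
            (diag_mx (row4 1 1 (-1) (- Num.sg (hollow_disc a b c d e f)))).
Proof.
move=> a_lt0 b_lt0 d_lt0; have bd_gt0 : 0 < b * d by rewrite nmulr_rgt0.
have <- : map_mx Num.sg (row4 (- 2 * a) (- 2 * b * d / a) (2 * a)
                              (hollow_disc a b c d e f / (2 * a * b * d))) =
          row4 1 1 (-1) (- Num.sg (hollow_disc a b c d e f)).
  apply/rowP => -[[|[|[|[|?]]]] ?] //; rewrite !mxE /=.
  - by rewrite gtr0_sg // mulNr oppr_gt0 pmulr_rlt0.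
  - by rewrite gtr0_sg // nmulr_lgt0 ?invr_lt0 // -mulrA mulNr oppr_lt0 mulr_gt0.
  - by rewrite ltr0_sg // pmulr_rlt0.
  - rewrite sgrM sgrV [Num.sg (_ * d)]ltr0_sg ?mulrN1 //.
    by rewrite -!mulrA pmulr_rlt0 // nmulr_rlt0.
apply: congruent_trans (congruent_diag_sg _).
by apply: hollow4_diag; rewrite lt_eqF.
Qed.

Lemma hollow_form_lt0 n (N : 'M[R]_n.+2) (a : 'rV[R]_n.+2) :
  (forall i, N i i = 0) -> (forall i j, i != j -> N i j < 0) -> (forall i, 0 < a 0 i) ->
  (a *m N *m a^T) 0 0 < 0.
Proof.
move=> N_diag N_lt0 a_gt0.
have term_le0 i j : a 0 i * N i j * a 0 j <= 0.
  have [->|ij] := eqVneq i j; first by rewrite N_diag mulr0 mul0r.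
  by rewrite ltW // pmulr_llt0 // pmulr_rlt0 // N_lt0.
rewrite !mxE; under eq_bigr => j _ do rewrite !mxE big_distrl /=.
rewrite pair_bigA (bigD1 (1, 0)) //=.
have rest_le0 : \sum_(p | p != (1, 0)) a 0 p.2 * N p.2 p.1 * a 0 p.1 <= 0.
  by apply: sumr_le0 => p _.
have : a 0 0 * N 0 1 * a 0 1 < 0 by rewrite pmulr_llt0 // pmulr_rlt0 // N_lt0.
lra.
Qed.

End Matrices.

Section RealSigns.
Variable R : rcfType.

Lemma mul_gt0_chain (p q r : R) : 0 < p * q -> 0 < q * r -> 0 < p * r.
Proof.
move=> pq qr; have q0 : q != 0 by apply: contraTneq pq => ->; rewrite mulr0 ltxx.
have -> : p * r = (p * q) * (q * r) / q ^+ 2 by field.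
by apply: divr_gt0; [exact: mulr_gt0 | rewrite exprn_even_gt0].
Qed.

Lemma offdiag_same_sign (T : eqType) (x : T -> T -> R) :
  (forall i j, x i j = x j i) ->
  (forall m j k, j != m -> k != m -> 0 < x m j * x m k) ->
  forall i j k l, i != j -> k != l -> 0 < x i j * x k l.
Proof.
move=> xC xP i j k l ij kl; have ji : j != i by rewrite eq_sym.
have [ki|ki] := eqVneq k i; first by subst k; apply: xP; rewrite // eq_sym.
have [li|li] := eqVneq l i; first by subst l; rewrite [x k i]xC; apply: xP.
have [kj|kj] := eqVneq k j; first by subst k; rewrite [x i j]xC; apply: xP; rewrite // eq_sym.
have [lj|lj] := eqVneq l j; first by subst l; rewrite [x i j]xC [x k j]xC; apply: xP.
apply: (@mul_gt0_chain _ (x i k)); first exact: xP.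
by rewrite [x i k]xC; apply: xP; rewrite // eq_sym.
Qed.

Lemma eq1_of_pairwise_inverse (x y z : R) :
  0 < x -> x * y = 1 -> x * z = 1 -> y * z = 1 -> x = 1.
Proof.
move=> x_gt0 xy xz yz; apply/eqP; rewrite -(sqrp_eq1 (ltW x_gt0)).
have -> : x ^+ 2 = (x * y) * (x * z) by rewrite expr2 -[LHS]mulr1 -yz mulrACA.
by rewrite xy xz mulr1.
Qed.

Lemma positive_combination_sign (I : finType) (w : I -> R) :
  (forall a : I -> R, (forall m, 0 < a m) -> \sum_m a m * w m != 0) ->
  forall j k, w j != 0 -> w k != 0 -> 0 < w j * w k.
Proof.
move=> comb_neq0.
have no_mixed j k : 0 < w j -> w k < 0 -> False.
  move=> wj_gt0 wk_lt0; pose T := \sum_m w m.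
  have [al [be [al_ge0 be_ge0 balance]]] :
      exists al be, [/\ 0 <= al, 0 <= be & T + al * w j + be * w k = 0].
    have [T_ge0|T_lt0] := lerP 0 T.
    - exists 0, (T / - w k); split => //; first by rewrite divr_ge0 // oppr_ge0 ltW.
      by field; rewrite ?oppr_eq0 lt_eqF.
    - exists (- T / w j), 0; split => //; first by rewrite divr_ge0 // ?oppr_ge0 ltW.
      by field; rewrite gt_eqF.
  pose a m := 1 + (if m == j then al else 0) + (if m == k then be else 0).
  have a_gt0 m : 0 < a m by rewrite /a; case: (m == j); case: (m == k); lra.
  have sum_a : \sum_m a m * w m = T + al * w j + be * w k.
    transitivity (\sum_m (w m + ((if m == j then al * w m else 0) +
                                 (if m == k then be * w m else 0)))).
      by apply: eq_bigr => m _; rewrite /a; case: (m == j); case: (m == k); ring.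
    by rewrite !big_split /= -!big_mkcond /= !big_pred1_eq addrA.
  by have := comb_neq0 a a_gt0; rewrite sum_a balance eqxx.
move=> j k; rewrite !neq_lt => /orP[wj_lt0|wj_gt0] /orP[wk_lt0|wk_gt0].
- by rewrite nmulr_rgt0.
- by case: (no_mixed k j).
- by case: (no_mixed j k).
- by rewrite mulr_gt0.
Qed.

End RealSigns.

Definition cyc3 (x y z : 'I_4) : {perm 'I_4} := (tperm x y * tperm x z)%g.

Lemma odd_perm_cyc3 (x y z : 'I_4) : x != y -> x != z -> odd_perm (cyc3 x y z) = false.
Proof. by rewrite odd_permM !odd_tperm => -> ->. Qed.

Section FlagGram.
Variables (R : rcfType) (v eta : 'I_4 -> 'rV[R]_4).
Local Notation G := (ev v eta).
Local Notation t := (triple_ratio v eta).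

Lemma triple_ratio_cycle i j k : t i j k = t j k i.
Proof. by rewrite /triple_ratio; congr (_ / _); ring. Qed.

Hypotheses (G_diag : forall i, G i i = 0) (G_neq0 : forall i j, i != j -> G i j != 0).

Lemma G_perm_neq0 (s : {perm 'I_4}) x y : x != y -> G (s x) (s y) != 0.
Proof. by move=> xy; apply: G_neq0; rewrite (inj_eq perm_inj). Qed.

Lemma e_sigma_neq0 (s : {perm 'I_4}) : e_sigma v eta s != 0.
Proof. by rewrite /e_sigma /edge_ratio !(mulf_neq0, invr_neq0) ?G_perm_neq0. Qed.

Lemma t_sigma_mul_opposite (s : {perm 'I_4}) :
  t_sigma v eta s * t (s o1) (s o0) (s o3) = e_op v eta s / e_sigma v eta s.
Proof.
by rewrite /t_sigma /e_op /e_sigma /triple_ratio /edge_ratio; field; rewrite ?G_perm_neq0.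
Qed.

Lemma triple_ratio_symmetrizer :
  t o0 o1 o2 = 1 -> t o0 o2 o3 = 1 -> t o0 o3 o1 = 1 ->
  exists mu : 'I_4 -> R, (forall i, mu i != 0) /\ forall i j, G i j / mu i = G j i / mu j.
Proof.
have cocycle i j k : i != j -> j != k -> k != i -> t i j k = 1 ->
    G i j * G j k * G k i = G i k * G j i * G k j.
  move=> ij jk ki t1; have den_neq0 : G i k * G j i * G k j != 0.
    by rewrite !mulf_neq0 ?G_neq0 // eq_sym.
  by rewrite -[RHS]mul1r -t1 mulfVK.
move=> /(cocycle o0 o1 o2 isT isT isT) t012 /(cocycle o0 o2 o3 isT isT isT) t023
       /(cocycle o0 o3 o1 isT isT isT) t031.
have G21 : G o2 o1 = G o0 o1 * G o1 o2 * G o2 o0 / (G o0 o2 * G o1 o0).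
  by rewrite t012; field; rewrite ?G_neq0.
have G31 : G o3 o1 = G o0 o1 * G o3 o0 * G o1 o3 / (G o0 o3 * G o1 o0).
  by rewrite -t031; field; rewrite ?G_neq0.
have G32 : G o3 o2 = G o0 o2 * G o2 o3 * G o3 o0 / (G o0 o3 * G o2 o0).
  by rewrite t023; field; rewrite ?G_neq0.
(* [o0] is set apart because [G o0 o0 / G o0 o0] is [0]. *)
exists (fun i => if i == o0 then 1 else G i o0 / G o0 i); split.
  move=> i; have [_|i0] := eqVneq i o0; first exact: oner_neq0.
  by apply: mulf_neq0; rewrite ?invr_eq0 G_neq0 // eq_sym.
move=> i j; case: (ord4P i) => ->; case: (ord4P j) => -> //=.
all: rewrite ?G21 ?G31 ?G32; field; by rewrite ?G_neq0.
Qed.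

Section FrameSigns.
Variable c : 'I_4 -> R.
Hypotheses (c_neq0 : forall m, c m != 0)
  (frame_signs : forall m j k, j != m -> k != m -> 0 < c j * G m j * (c k * G m k)).

Lemma t_sigma_gt0 (s : {perm 'I_4}) : 0 < t_sigma v eta s.
Proof.
set i := s o0; set j := s o1; set k := s o2.
have Gik : G i k != 0 by exact: G_perm_neq0.
have Gji : G j i != 0 by exact: G_perm_neq0.
have Gkj : G k j != 0 by exact: G_perm_neq0.
have -> : t_sigma v eta s = (c j * G i j * (c k * G i k)) * (c k * G j k * (c i * G j i)) *
    (c i * G k i * (c j * G k j)) / (c i * c j * c k * G i k * G j i * G k j) ^+ 2.
  by rewrite /t_sigma /triple_ratio -/i -/j -/k; field; rewrite ?Gik ?Gji ?Gkj ?c_neq0.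
apply: divr_gt0.
  by apply: mulr_gt0; [apply: mulr_gt0|]; apply: frame_signs; rewrite (inj_eq perm_inj).
by rewrite exprn_even_gt0 //= !mulf_neq0.
Qed.

(* Faces (s0 s1 s2), (s1 s0 s3) and (s2 s1 s3) are pairwise adjacent; by
   [t_sigma_mul_opposite] their triple ratios are pairwise inverse. *)
Lemma e_op_triple_ratio :
  (forall s : {perm 'I_4}, ~~ odd_perm s -> e_sigma v eta s = e_op v eta s) ->
  forall s : {perm 'I_4}, ~~ odd_perm s -> t_sigma v eta s = 1.
Proof.
move=> e_sym s s_even.
have face_pair p : ~~ odd_perm p -> t (p o0) (p o1) (p o2) * t (p o1) (p o0) (p o3) = 1.
  by move=> p_even; rewrite [LHS]t_sigma_mul_opposite -e_sym // divff ?e_sigma_neq0.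
have xy := face_pair s s_even.
have xz := face_pair (cyc3 o0 o1 o2 * s)%g; rewrite odd_permM odd_perm_cyc3 // in xz.
have zy := face_pair (cyc3 o0 o1 o3 * s)%g; rewrite odd_permM odd_perm_cyc3 // in zy.
rewrite /cyc3 !permM !permE /= in xz zy.
rewrite -(triple_ratio_cycle (s o0)) in xz.
rewrite (triple_ratio_cycle (s o3)) -(triple_ratio_cycle (s o2)) mulrC in zy.
exact: eq1_of_pairwise_inverse (t_sigma_gt0 s) xy (xz s_even) (zy s_even).
Qed.

Lemma negative_gram_factor :
  (forall s : {perm 'I_4}, ~~ odd_perm s -> t_sigma v eta s = 1) ->
  exists (N : 'M[R]_4) (lam : 'I_4 -> R),
  [/\ N^T = N, forall i, N i i = 0, forall i j, i != j -> N i j < 0,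
      forall i, lam i != 0 & forall i j, c j * G i j = lam i * N i j].
Proof.
move=> t1.
have face p : ~~ odd_perm p -> t (p o0) (p o1) (p o2) = 1 := t1 p.
have t012 : t o0 o1 o2 = 1 by have := face 1%g; rewrite odd_perm1 !perm1; apply.
have t023 : t o0 o2 o3 = 1.
  by have := face (cyc3 o1 o2 o3); rewrite odd_perm_cyc3 // /cyc3 !permM !permE; apply.
have t031 : t o0 o3 o1 = 1.
  by have := face (cyc3 o1 o3 o2); rewrite odd_perm_cyc3 // /cyc3 !permM !permE; apply.
have [mu [mu_neq0 mu_sym]] := triple_ratio_symmetrizer t012 t023 t031.
pose x i j := c i * c j * (G i j / mu i).
have xC i j : x i j = x j i by rewrite /x mu_sym; ring.
have x_signs m j k : j != m -> k != m -> 0 < x m j * x m k.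
  move=> jm km; have -> : x m j * x m k = (c m / mu m) ^+ 2 * (c j * G m j * (c k * G m k)).
    by rewrite /x; field; rewrite mu_neq0.
  by rewrite mulr_gt0 ?frame_signs // exprn_even_gt0 //= mulf_neq0 ?invr_eq0.
have x01_signs i j : i != j -> 0 < x o0 o1 * x i j by apply: offdiag_same_sign.
have x01_neq0 : x o0 o1 != 0.
  by apply: contraTneq (x01_signs o0 o1 isT) => ->; rewrite mul0r ltxx.
exists (\matrix_(i, j) - (x o0 o1 * x i j)), (fun i => - mu i / (c i * x o0 o1)); split.
- by apply/matrixP => i j; rewrite !mxE [x i j]xC.
- by move=> i; rewrite mxE /x G_diag mul0r !mulr0 oppr0.
- by move=> i j ij; rewrite mxE oppr_lt0 x01_signs.
- move=> i; apply: mulf_neq0; rewrite ?oppr_eq0 ?invr_eq0 ?mu_neq0 //.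
  exact: mulf_neq0.
- by move=> i j; rewrite mxE /x; field; rewrite ?c_neq0 ?mu_neq0 ?G_neq0.
Qed.

End FrameSigns.
End FlagGram.

Section FactoredGram.
Variables (R : rcfType) (v eta : 'I_4 -> 'rV[R]_4).
Variables (lam kk : 'I_4 -> R) (M : 'I_4 -> 'I_4 -> R).
Hypotheses (lam_neq0 : forall i, lam i != 0) (kk_neq0 : forall i, kk i != 0)
  (M_sym : forall i j, M i j = M j i) (M_neq0 : forall i j, i != j -> M i j != 0)
  (G_factor : forall i j, ev v eta i j = lam i * M i j * kk j).

Variable s : {perm 'I_4}.
Local Notation i := (s o0).
Local Notation j := (s o1).
Local Notation k := (s o2).
Local Notation l := (s o3).

Let M_perm_neq0 x y : x != y -> M (s x) (s y) != 0.
Proof. by move=> xy; rewrite M_neq0 // (inj_eq perm_inj). Qed.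

Lemma factored_t_sigma : t_sigma v eta s = 1.
Proof.
rewrite /t_sigma /triple_ratio !G_factor (M_sym j i) (M_sym k i) (M_sym k j).
by field; rewrite ?lam_neq0 ?kk_neq0 ?M_perm_neq0.
Qed.

Lemma factored_e_sigma : e_sigma v eta s = e_op v eta s.
Proof.
rewrite /e_sigma /e_op /edge_ratio !G_factor (M_sym l j) (M_sym k i) (M_sym l i) (M_sym k j).
by field; rewrite ?lam_neq0 ?kk_neq0 ?M_perm_neq0.
Qed.

Lemma factored_j_sigma : j_sigma v eta s * (4 * (M i l * M j k) ^+ 2) =
  - hollow_disc (M i j) (M i k) (M i l) (M j k) (M j l) (M k l).
Proof.
rewrite /j_sigma /X_sigma factored_t_sigma /mu_sigma /e_sigma /e_plus /e_minus /edge_ratio.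
rewrite /hollow_disc !G_factor.
rewrite ?(M_sym j i) ?(M_sym k i) ?(M_sym k j) ?(M_sym l i) ?(M_sym l j) ?(M_sym l k).
by field; rewrite ?lam_neq0 ?kk_neq0 ?M_perm_neq0.
Qed.

End FactoredGram.

Section Pairing.
Variable R : rcfType.

Lemma pairE (e w : 'rV[R]_4) : pair e w = \sum_x e 0 x * w 0 x.
Proof. by rewrite /pair !mxE; apply: eq_bigr => x _; rewrite mxE. Qed.

Lemma pair_sum (e : 'rV[R]_4) (x : 'I_4 -> R) (w : 'I_4 -> 'rV[R]_4) :
  pair e (\sum_k x k *: w k) = \sum_k x k * pair e (w k).
Proof.
rewrite pairE; under eq_bigr => y _ do rewrite summxE big_distrr /=.
rewrite exchange_big /=; apply: eq_bigr => k _.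
by rewrite pairE big_distrr /=; apply: eq_bigr => y _; rewrite !mxE mulrCA.
Qed.

Lemma bform_sym (B : 'M[R]_4) x y : B^T = B -> bform B x y = bform B y x.
Proof.
move=> symB; rewrite /bform.
transitivity ((x *m B *m y^T)^T 0 0); first by rewrite [RHS]mxE.
by rewrite !trmx_mul trmxK symB mulmxA.
Qed.

End Pairing.

Section Tetrahedron.
Variables (R : rcfType) (v eta : 'I_4 -> 'rV[R]_4).
Hypothesis tetra : tetra_of_flags v eta.
Local Notation G := (ev v eta).

Lemma ev_diag i : G i i = 0.
Proof. by case: tetra => _ [nondeg _]; apply/nondeg. Qed.

Lemma ev_neq0 i j : i != j -> G i j != 0.
Proof. by case: tetra => _ [nondeg _]; apply: contra => /eqP /nondeg ->. Qed.

Definition frame (c : 'I_4 -> R) : 'M[R]_4 := \matrix_(i, j) (c i * v i 0 j).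

Lemma row_frame c m : row m (frame c) = c m *: v m.
Proof. by apply/rowP => k; rewrite !mxE. Qed.

Lemma pair_frame c (e : 'rV[R]_4) m : (e *m (frame c)^T) 0 m = c m * pair e (v m).
Proof. by rewrite !mxE pairE big_distrr; apply: eq_bigr => x _; rewrite !mxE mulrCA. Qed.

Lemma frame_unit c : (forall m, c m != 0) -> frame c \in unitmx.
Proof.
move=> c_neq0; rewrite unitmxE unitfE -det_tr; apply/negP; case/det0P => e e_neq0 eW.
case: tetra => _ [_ [not_coplanar _]]; apply: not_coplanar; exists e; split => // m.
have /eqP := pair_frame c e m; rewrite eW mxE eq_sym mulf_eq0 (negbTE (c_neq0 m)).
by move/eqP.
Qed.

Lemma tetra_signs : exists c : 'I_4 -> R, (forall m, c m != 0) /\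
  forall m j k, j != m -> k != m -> 0 < c j * G m j * (c k * G m k).
Proof.
case: tetra => _ [_ [_ [c [c_neq0 interior]]]]; exists c; split => // m j k jm km.
apply: (positive_combination_sign (w := fun x => c x * G m x)) => [a a_gt0||].
- have := interior a a_gt0 m; rewrite /tpoint pair_sum.
  by under eq_bigr => x _ do rewrite -mulrA.
- by rewrite mulf_neq0 ?ev_neq0 // eq_sym.
- by rewrite mulf_neq0 ?ev_neq0 // eq_sym.
Qed.

End Tetrahedron.

Section InscribingForm.
Variables (R : rcfType) (v eta : 'I_4 -> 'rV[R]_4).
Local Notation G := (ev v eta).
Variables (c : 'I_4 -> R) (N : 'M[R]_4) (lam : 'I_4 -> R).
Hypotheses (W_unit : frame v c \in unitmx) (c_neq0 : forall m, c m != 0)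
  (N_sym : N^T = N) (N_diag : forall i, N i i = 0) (N_lt0 : forall i j, i != j -> N i j < 0)
  (lam_neq0 : forall i, lam i != 0) (G_factor : forall i j, c j * G i j = lam i * N i j).
Local Notation W := (frame v c).

(* The Gram matrix of this form in the basis (c_m v_m) is N. *)
Definition inscribing_form : 'M[R]_4 := invmx W *m N *m (invmx W)^T.
Local Notation B := inscribing_form.

Lemma inscribing_form_sym : B^T = B.
Proof. by rewrite /B !trmx_mul trmxK N_sym mulmxA. Qed.

Lemma congruent_inscribing_form : congruent B N.
Proof.
exists W; split => //.
by rewrite /B !mulmxA mulmxV // mul1mx -mulmxA -trmx_mul mulmxV // trmx1 mulmx1.
Qed.

Lemma bform_inscribingE x y :
  bform B x y = ((x *m invmx W) *m N *m (y *m invmx W)^T) 0 0.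
Proof. by rewrite /bform /B trmx_mul !mulmxA. Qed.

Lemma vertex_invframe m : v m *m invmx W = (c m)^-1 *: 'e_m.
Proof.
have -> : v m = (c m)^-1 *: ('e_m *m W) by rewrite -rowE row_frame scalerA mulVf ?scale1r.
by rewrite -scalemxAl mulmxK.
Qed.

Lemma vertex_inscribing_form m : v m *m B = (c m)^-1 *: (row m N *m (invmx W)^T).
Proof. by rewrite /B !mulmxA vertex_invframe -!scalemxAl -rowE. Qed.

Lemma bform_inscribing i j : bform B (v i) (v j) = (c i)^-1 * (c j)^-1 * N i j.
Proof.
rewrite bform_inscribingE !vertex_invframe linearZ /= -scalemxAr -!scalemxAl.
by rewrite -rowE trmx_delta -colE !mxE mulrCA mulrA.
Qed.

Lemma inscribing_form_nonradical m : v m *m B != 0.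
Proof.
rewrite vertex_inscribing_form scaler_eq0 invr_eq0 negb_or c_neq0 /=.
apply/eqP => rowNW0.
have : row m N = row m N *m (invmx W)^T *m W^T.
  by rewrite -mulmxA -trmx_mul mulmxV // trmx1 mulmx1.
rewrite rowNW0 mul0mx => /rowP/(_ (lift m ord0)); rewrite !mxE => Nm0.
by have := N_lt0 (neq_lift m ord0); rewrite Nm0 ltxx.
Qed.

Lemma eta_inscribing m : eta m = (lam m * c m) *: (v m *m B).
Proof.
have etaW : eta m *m W^T = lam m *: row m N.
  by apply/rowP => k; rewrite pair_frame G_factor !mxE.
rewrite vertex_inscribing_form scalerA mulfK // scalemxAl -etaW.
by rewrite -mulmxA -trmx_mul mulVmx // trmx1 mulmx1.
Qed.

Lemma inscribed_inscribing_form : inscribed_in B v eta.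
Proof.
split; [|split; [|split]].
- exists c; split => // a a_gt0.
  have -> : tpoint v c a = (\row_k a k) *m W.
    rewrite mulmx_sum_row /tpoint; apply: eq_bigr => k _.
    by rewrite row_frame mxE scalerA.
  by rewrite bform_inscribingE mulmxK //; apply: hollow_form_lt0 => // k; rewrite mxE.
- by move=> m; rewrite bform_inscribing N_diag mulr0.
- exact: inscribing_form_nonradical.
- by move=> m; exists (lam m * c m); rewrite mulf_neq0 // eta_inscribing.
Qed.

Lemma inscribing_form_signature (s : {perm 'I_4}) :
  (0 < j_sigma v eta s -> hyperbolic_form B) /\ (j_sigma v eta s < 0 -> AdS_form B) /\
  (j_sigma v eta s = 0 -> halfpipe_form B).
Proof.
have N_symE i j : N i j = N j i by rewrite -[in LHS]N_sym mxE.
have N_perm_lt0 x y : x != y -> N (s x) (s y) < 0.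
  by move=> xy; rewrite N_lt0 // (inj_eq perm_inj).
have G_factorE i j : G i j = lam i * N i j * (c j)^-1 by rewrite -G_factor mulrC mulKf.
have j_disc := factored_j_sigma (M := fun i j => N i j) lam_neq0
  (fun i => invr_neq0 (c_neq0 i)) N_symE (fun i j ij => ltr0_neq0 (N_lt0 ij)) G_factorE s.
have sg_j : Num.sg (j_sigma v eta s) = - Num.sg (hollow_disc (N (s o0) (s o1))
    (N (s o0) (s o2)) (N (s o0) (s o3)) (N (s o1) (s o2)) (N (s o1) (s o3)) (N (s o2) (s o3))).
  have := congr1 Num.sg j_disc; rewrite sgrM sgrN [Num.sg (4 * _)]gtr0_sg ?mulr1 //.
  by apply: mulr_gt0 => //; rewrite exprn_even_gt0 //= mulf_neq0 // ltr0_neq0 // N_perm_lt0.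
apply: signature_of_sg; first exact: inscribing_form_sym.
rewrite sg_j; apply: congruent_trans congruent_inscribing_form _.
apply: congruent_trans (congruent_perm N s) _.
by rewrite hollow4_perm //; apply: hollow4_congruent_sg; exact: N_perm_lt0.
Qed.

End InscribingForm.

Section Inscribed.
Variables (R : rcfType) (v eta : 'I_4 -> 'rV[R]_4).
Hypothesis tetra : tetra_of_flags v eta.

Lemma inscribed_tetra_form :
  inscribed_tetra v eta -> exists B : 'M[R]_4, B^T = B /\ inscribed_in B v eta.
Proof. by case=> [|[|]] [B [[symB _] insc]]; exists B. Qed.

Lemma inscribed_gram_factor : inscribed_tetra v eta ->
  exists (lam : 'I_4 -> R) (M : 'I_4 -> 'I_4 -> R),
  [/\ forall i, lam i != 0, forall i j, M i j = M j i, forall i j, i != j -> M i j != 0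
    & forall i j, ev v eta i j = lam i * M i j * 1].
Proof.
move=> /inscribed_tetra_form [B [symB [_ [_ [_ eta_tangent]]]]].
have [lam lamP] := fin_all_exists eta_tangent.
have G_factor i j : ev v eta i j = lam i * bform B (v i) (v j) * 1.
  by rewrite /ev /pair /bform; case: (lamP i) => _ ->; rewrite -scalemxAl mxE mulr1.
exists lam, (fun i j => bform B (v i) (v j)); split => [i|i j|i j ij|//].
- by case: (lamP i).
- exact: bform_sym.
- by apply: contraNneq (ev_neq0 tetra ij) => B0; rewrite G_factor B0 mulr0 mul0r.
Qed.

Lemma inscribed_t_sigma : inscribed_tetra v eta -> forall s, t_sigma v eta s = 1.
Proof.
move=> /inscribed_gram_factor [lam [M [lam_neq0 M_sym M_neq0 G_factor]]] s.
exact: factored_t_sigma lam_neq0 (fun _ => oner_neq0 R) M_sym M_neq0 G_factor s.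
Qed.

Lemma inscribed_e_sigma : inscribed_tetra v eta -> forall s, e_sigma v eta s = e_op v eta s.
Proof.
move=> /inscribed_gram_factor [lam [M [lam_neq0 M_sym M_neq0 G_factor]]] s.
exact: factored_e_sigma lam_neq0 (fun _ => oner_neq0 R) M_sym M_neq0 G_factor s.
Qed.

Lemma t_sigma_classification :
  (forall s : {perm 'I_4}, ~~ odd_perm s -> t_sigma v eta s = 1) ->
  forall s : {perm 'I_4},
    (0 < j_sigma v eta s -> inscribed_hyperbolic v eta) /\
    (j_sigma v eta s < 0 -> inscribed_AdS v eta) /\
    (j_sigma v eta s = 0 -> inscribed_halfpipe v eta).
Proof.
move=> t1 s; have [c [c_neq0 signs]] := tetra_signs tetra.
have [N [lam [N_sym N_diag N_lt0 lam_neq0 G_factor]]] :=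
  negative_gram_factor (ev_diag tetra) (ev_neq0 tetra) c_neq0 signs t1.
have W_unit := frame_unit tetra c_neq0.
have insc : inscribed_in (inscribing_form v c N) v eta.
  exact: (inscribed_inscribing_form (lam := lam)).
have [hyp [ads hp]] :=
  inscribing_form_signature W_unit c_neq0 N_sym N_diag N_lt0 lam_neq0 G_factor s.
split; [|split] => j_sgn; exists (inscribing_form v c N); split => //.
- exact: hyp.
- exact: ads.
- exact: hp.
Qed.

Lemma t_sigma_inscribed :
  (forall s : {perm 'I_4}, ~~ odd_perm s -> t_sigma v eta s = 1) -> inscribed_tetra v eta.
Proof.
move=> /t_sigma_classification /(_ 1%g) [hyp [ads hp]].
by case: (ltrgtP 0 (j_sigma v eta 1)) => [/hyp|/ads|/esym/hp]; [left|right; left|right; right].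
Qed.

End Inscribed.

Theorem theorem5p3 (R : rcfType) (v eta : 'I_4 -> 'rV[R]_4) :
  tetra_of_flags v eta ->
  (inscribed_tetra v eta <->
     (forall s : {perm 'I_4}, ~~ odd_perm s -> t_sigma v eta s = 1)) /\
  (inscribed_tetra v eta <->
     (forall s : {perm 'I_4}, ~~ odd_perm s -> e_sigma v eta s = e_op v eta s)) /\
  (inscribed_tetra v eta ->
     forall s : {perm 'I_4}, ~~ odd_perm s ->
       (0 < j_sigma v eta s -> inscribed_hyperbolic v eta) /\
       (j_sigma v eta s < 0 -> inscribed_AdS v eta) /\
       (j_sigma v eta s = 0 -> inscribed_halfpipe v eta)).
Proof.
move=> tetra; have [c [c_neq0 signs]] := tetra_signs tetra.
split; [split|split; [split|]].
- by move=> insc s _; exact: inscribed_t_sigma.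
- exact: t_sigma_inscribed tetra.
- by move=> insc s _; exact: inscribed_e_sigma.
- move=> e_sym; apply: (t_sigma_inscribed tetra).
  exact (e_op_triple_ratio (ev_neq0 tetra) c_neq0 signs e_sym).
- move=> insc s _; apply: (t_sigma_classification tetra) => p _.
  exact: inscribed_t_sigma.
Qed.
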